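(* Let $\Pi_n$ be a PARITY$_n$ program such that no rule $y\leftarrow B$ of $\Pi_n$ has $y\in var(B)$. (i) If $x\leftarrow B\in\Pi_n$ with $x$ a variable, $B$ consistent, and $B\cup\{x\}$ does not fully cover $\{x_1,\dots,x_n\}$, then $not\ not\ x\in B$. (ii) If $H\leftarrow B\in\Pi_n$ with $B$ consistent and either $H=\bot$, or $H$ is a variable $x$ with $not\ x\in B$ (i.e. $B\cup\{H\}$ is inconsistent), then $B$ fully covers $\{x_1,\dots,x_n\}$.
   Context: A rule element is one of $\top$, $\bot$, $x$, $not\ x$, $not\ not\ x$, where $x$ is a variable. A (canonical) rule is $H\leftarrow B$ with $H$ a variable or $\bot$ and $B$ a finite set of rule elements; a canonical program is a finite set of rules. For a body $B$, $var(B)=\{e\in B: e\text{ is a variable}\}$. For a set of variables $I$: $I\models\top$; $I\not\models\bot$; $I\models x$ iff $I\models not\ not\ x$ iff $x\in I$; $I\models not\ x$ iff $x\notin I$; $I\models B$ iff $I$ satisfies every element of $B$; $I$ is closed under $H\leftarrow B$ if $I\models B$ implies $I\models H$. The reduct $\Pi^I$ replaces $not\ not\ x$ by $\top$ if $x\in I$ else $\bot$, and $not\ x$ by $\top$ if $x\notin I$ else $\bot$; $I$ is an answer set of $\Pi$ if $I$ is the least set closed under all rules of $\Pi^I$; $Ans(\Pi)$ is the set of answer sets; $var(\Pi)$ the set of variables occurring in $\Pi$. Strings $w\in\{0,1\}^n$ are identified with $\{x_i:w_i=1\}$; PARITY$_n$ is the set of strings in $\{0,1\}^n$ with an odd number of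 1's; a PARITY$_n$ program is a canonical program $\Pi$ with $var(\Pi)=\{x_1,\dots,x_n\}$ and $Ans(\Pi)=$ PARITY$_n$. For a set $B$ of rule elements, $S(B)=\{I\subseteq\{x_1,\dots,x_n\}: I\models B\}$; $B$ is consistent if $S(B)\neq\emptyset$. $B$ covers a variable $x$ if $x\in B$, $not\ x\in B$ or $not\ not\ x\in B$; $B$ fully covers $\{x_1,\dots,x_n\}$ if it covers every $x_i$. *)

(* Variables x_1..x_n are represented by 'I_n (x_{i+1} <-> i). *)
From mathcomp Require Import all_boot.
Set Implicit Arguments. Unset Strict Implicit. Unset Printing Implicit Defensive.

Inductive elem (n : nat) : Type :=
| ETop | EBot | EPos of 'I_n | ENeg of 'I_n | ENN of 'I_n.
Arguments ETop {n}. Arguments EBot {n}.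

(* A canonical rule H <- B; head None means bot. Body: finite set given as a list. *)
Record rule (n : nat) := Rule { rhead : option 'I_n; rbody : seq (elem n) }.

Definition program (n : nat) := seq (rule n).

Definition sat_elem n (I : {set 'I_n}) (e : elem n) : bool :=
  match e with
  | ETop => true
  | EBot => false
  | EPos x => x \in I
  | ENeg x => x \notin I
  | ENN x => x \in I
  end.

Definition sat_body n (I : {set 'I_n}) (B : seq (elem n)) : bool :=
  all (sat_elem I) B.

Definition sat_head n (I : {set 'I_n}) (H : option 'I_n) : bool :=
  if H is Some x then x \in I else false.

Definition closed_rule n (I : {set 'I_n}) (r : rule n) : bool :=
  sat_body I (rbody r) ==> sat_head I (rhead r).

Definition closed_prog n (I : {set 'I_n}) (P : program n) : bool :=
  all (closed_rule I) P.

Definition reduct_elem n (I : {set 'I_n}) (e : elem n) : elem n :=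
  match e with
  | ENN x => if x \in I then ETop else EBot
  | ENeg x => if x \notin I then ETop else EBot
  | e => e
  end.

Definition reduct n (P : program n) (I : {set 'I_n}) : program n :=
  [seq Rule (rhead r) (map (reduct_elem I) (rbody r)) | r <- P].

Definition answer_set n (P : program n) (I : {set 'I_n}) : Prop :=
  closed_prog I (reduct P I) /\
  forall J : {set 'I_n}, closed_prog J (reduct P I) -> I \subset J.

Definition elem_var n (e : elem n) : option 'I_n :=
  match e with
  | EPos x | ENeg x | ENN x => Some x
  | _ => None
  end.

Definition occurs n (P : program n) (x : 'I_n) : bool :=
  has (fun r => (rhead r == Some x) || has (fun e => elem_var e == Some x) (rbody r)) P.

(* PARITY_n program: var(P) = {x_1..x_n} and Ans(P) = strings with odd number of 1s *)
Definition parity_program n (P : program n) : Prop :=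
  (forall x : 'I_n, occurs P x) /\
  (forall I : {set 'I_n}, answer_set P I <-> odd #|I|).

Definition consistent n (B : seq (elem n)) : Prop :=
  exists I : {set 'I_n}, sat_body I B.

Definition covers n (B : seq (elem n)) (x : 'I_n) : bool :=
  has (fun e => match e with
                | EPos y | ENeg y | ENN y => y == x
                | _ => false end) B.

Definition fully_covers n (B : seq (elem n)) : Prop :=
  forall x : 'I_n, covers B x.

Definition has_pos n (B : seq (elem n)) (x : 'I_n) : bool :=
  has (fun e => if e is EPos y then y == x else false) B.
Definition has_neg n (B : seq (elem n)) (x : 'I_n) : bool :=
  has (fun e => if e is ENeg y then y == x else false) B.
Definition has_nn n (B : seq (elem n)) (x : 'I_n) : bool :=
  has (fun e => if e is ENN y then y == x else false) B.

(* rule membership in a program (Prop, no eqType needed) *)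
Fixpoint in_prog n (r : rule n) (P : program n) : Prop :=
  match P with
  | [::] => False
  | r' :: P' => r' = r \/ in_prog r P'
  end.

(* Let H <- B be a rule of a PARITY_n program with B satisfied by I, and z a
   variable not covered by B.  Changing I at z if necessary gives an odd set J
   that still satisfies B; J is an answer set, hence closed under the reduct of
   the rule, so J satisfies H.  (ii): H is bot, or H = x with not x in B, so J
   cannot satisfy H; hence no variable is uncovered.  (i): if B contains neither
   x (excluded by hypothesis) nor not not x, then I \ x still satisfies B, and
   flipping an uncovered y <> x yields an answer set J satisfying B without x. *)
From mathcomp Require Import all_boot.

Set Implicit Arguments.
Unset Strict Implicit.
Unset Printing Implicit Defensive.

Lemma sat_body_covered_eq n (B : seq (elem n)) (I J : {set 'I_n}) :
  (forall y, covers B y -> (y \in I) = (y \in J)) -> sat_body I B = sat_body J B.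
Proof.
rewrite /sat_body /covers; elim: B => [//|e B IH] eqIJ /=.
rewrite IH => [|y By]; last by apply: eqIJ; rewrite /= By orbT.
by case: e eqIJ => //= y eqIJ; rewrite eqIJ //= eqxx.
Qed.

Lemma sat_body_reduct n (B : seq (elem n)) (I : {set 'I_n}) :
  sat_body I (map (reduct_elem I) B) = sat_body I B.
Proof.
by rewrite /sat_body; elim: B => //= e B ->; case: e => //= y; case: (y \in I).
Qed.

Lemma sat_body_setD1 n (B : seq (elem n)) (I : {set 'I_n}) x :
  sat_body I B -> ~~ has_pos B x -> ~~ has_nn B x -> sat_body (I :\ x) B.
Proof.
rewrite /sat_body /has_pos /has_nn; elim: B => //= e B IH /andP[Ie IB].
rewrite !negb_or => /andP[pos_e pos_B] /andP[nn_e nn_B].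
rewrite IH // andbT.
by case: e Ie pos_e nn_e => //= y Iy; rewrite in_setD1 ?(negbTE Iy) ?andbF // Iy andbT.
Qed.

Lemma has_neg_sat_notin n (B : seq (elem n)) (I : {set 'I_n}) x :
  sat_body I B -> has_neg B x -> x \notin I.
Proof.
rewrite /sat_body /has_neg; elim: B => //= e B IH /andP[Ie IB] /orP[|]; last exact: IH.
by case: e Ie => //= y Iy /eqP <-.
Qed.

Lemma odd_set_off1 (T : finType) (I : {set T}) z :
  exists2 J : {set T}, odd #|J| & forall y, y != z -> (y \in I) = (y \in J).
Proof.
have [oddI | evenI] := boolP (odd #|I|); first by exists I.
have [Iz | nIz] := boolP (z \in I).
- exists (I :\ z); last by move=> y yz; rewrite in_setD1 yz.
  by move: evenI; rewrite (cardsD1 z I) Iz add1n negbK.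
- exists (z |: I); last by move=> y yz; rewrite in_setU1 (negbTE yz).
  by rewrite cardsU1 nIz add1n /= evenI.
Qed.

Lemma answer_set_sat_rule n (P : program n) I r :
  answer_set P I -> in_prog r P -> sat_body I (rbody r) -> sat_head I (rhead r).
Proof.
case=> + _; rewrite /closed_prog /reduct.
elim: P => [//|r' P IH] /= /andP[closed_r' closed_P] [<-|rP] IB; last exact: IH.
by move: closed_r'; rewrite /closed_rule /= sat_body_reduct IB.
Qed.

Lemma parity_sat_head_off_uncovered n (P : program n) H B (I : {set 'I_n}) z :
  parity_program P -> in_prog (Rule H B) P -> sat_body I B -> ~~ covers B z ->
  exists J : {set 'I_n}, [/\ sat_body J B, sat_head J H &
                             forall y, y != z -> (y \in I) = (y \in J)].
Proof.
move=> [_ ansP] HB_P IB uncov_z.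
have [J oddJ eqIJ] := odd_set_off1 I z.
have JB : sat_body J B.
  rewrite -(@sat_body_covered_eq _ _ I J) // => y By; apply: eqIJ.
  by apply: contraNneq uncov_z => <-.
by exists J; split=> //; exact: (answer_set_sat_rule (proj2 (ansP J) oddJ) HB_P JB).
Qed.

Theorem mainTheorem15 (n : nat) (P : program n) :
  parity_program P ->
  (forall r, in_prog r P -> forall y, rhead r = Some y -> ~~ has_pos (rbody r) y) ->
  (forall (x : 'I_n) (B : seq (elem n)),
      in_prog (Rule (Some x) B) P -> consistent B ->
      ~ (forall y : 'I_n, (y == x) || covers B y) ->
      has_nn B x) /\
  (forall (H : option 'I_n) (B : seq (elem n)),
      in_prog (Rule H B) P -> consistent B ->
      (H = None \/ exists x, H = Some x /\ has_neg B x) ->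
      fully_covers B).
Proof.
move=> parP no_self_pos; split.
- move=> x B xB_P [I IB] not_covered.
  have [// | nn_x] := boolP (has_nn B x); case: not_covered => y.
  apply: contraT; rewrite negb_or => /andP[yx uncov_y].
  have IxB := sat_body_setD1 IB (no_self_pos _ xB_P x erefl) nn_x.
  have [J [_ /= xJ eqIJ]] := parity_sat_head_off_uncovered parP xB_P IxB uncov_y.
  by move: xJ; rewrite -eqIJ ?setD11 // eq_sym.
- move=> H B HB_P [I IB] H_false z; apply: contraT => uncov_z.
  have [J [JB HJ _]] := parity_sat_head_off_uncovered parP HB_P IB uncov_z.
  case: H_false HJ => [-> // | [x [-> neg_x]]] /=.
  by rewrite (negbTE (has_neg_sat_notin JB neg_x)).
Qed.
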